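(* For the modified navigation function $\mathcal{V}_{nav}$ defined below, for all $(p,\theta)\in\mathcal{X}_p\times\mathbb{R}$, $$\nabla_p\mathcal{V}_{nav}(p,\theta)=\nabla_pV_{nav}(p)+(I_2-\mathcal{R}(\theta))^\top(p_d-p_o),$$ $$\nabla_\theta\mathcal{V}_{nav}(p,\theta)=\gamma_\theta\theta-(p-p_o)^\top\Delta\,\mathcal{R}(\theta)^\top(p_o-p_d),$$ and the set of critical points $C_{\mathcal{V}_{nav}}:=\{(p,\theta)\in\mathcal{X}_p\times\mathbb{R}:\nabla_p\mathcal{V}_{nav}(p,\theta)=0,\ \nabla_\theta\mathcal{V}_{nav}(p,\theta)=0\}$ equals $C_{V_{nav}}\times\{0\}$, where $C_{V_{nav}}=\{p\in\mathcal{X}_p:\nabla_pV_{nav}(p)=0\}$.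
   Context: Obstacle $\mathcal{O}=\{z\in\mathbb{R}^2:\|z-p_o\|\le r_o\}$ with center $p_o\in\mathbb{R}^2$ and radius $r_o>0$; safety margin $\varepsilon>0$; free space $\mathcal{X}_p=\{p\in\mathbb{R}^2:\|p-p_o\|\ge r_o+\varepsilon\}$. Distance $d_o(p)=\|p-p_o\|-r_o$. Destination $p_d\in\mathcal{X}_p$, $r_d:=d_o(p_d)$, and $r_s\in(\varepsilon,r_d)$. Barrier $\phi(z)=(z-r_s)^2\ln(r_s/z)$ for $z\in(0,r_s]$ and $\phi(z)=0$ for $z>r_s$. Navigation function $V_{nav}(p)=\frac12\|p-p_d\|^2+\varrho\,\phi(d_o(p))$ with $\varrho>0$; its gradient is $\nabla_pV_{nav}(p)=p-p_d+\varrho\,\phi'(d_o(p))\frac{p-p_o}{\|p-p_o\|}$. Rotation $\mathcal{R}(\theta)=\exp(\theta\Delta)=\begin{bmatrix}\cos\theta&-\sin\theta\\ \sin\theta&\cos\theta\end{bmatrix}$ with $\Delta=\begin{bmatrix}0&-1\\1&0\end{bmatrix}$. Transformation $\mathcal{T}(p,\theta)=p_o+\mathcal{R}(\theta)(p-p_o)$. Modified navigation function $\mathcal{V}_{nav}(p,\theta)=V_{nav}(\mathcal{T}(p,\theta))+\frac{\gamma_\theta}{2}\theta^2$ with $\gamma_\theta>0$, equivalently $\mathcal{V}_{nav}(p,\theta)=\frac12\|\mathcal{T}(p,\theta)-p_d\|^2+\varrho\phi(d_o(p))+\frac{\gamma_\theta}{2}\theta^2$. *)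

From Stdlib Require Import Reals.
From Coquelicot Require Import Coquelicot.
Open Scope R_scope.

Definition norm2 (x y : R) : R := sqrt (x * x + y * y).

Definition d_o (po1 po2 ro p1 p2 : R) : R := norm2 (p1 - po1) (p2 - po2) - ro.

Definition in_Xp (po1 po2 ro eps p1 p2 : R) : Prop :=
  norm2 (p1 - po1) (p2 - po2) >= ro + eps.

(* barrier phi (meaningful for z > 0) *)
Definition phi (rs z : R) : R :=
  if Rle_dec z rs then (z - rs) ^ 2 * ln (rs / z) else 0.

Definition Vnav (po1 po2 ro pd1 pd2 rs rho p1 p2 : R) : R :=
  / 2 * ((p1 - pd1) ^ 2 + (p2 - pd2) ^ 2)
  + rho * phi rs (d_o po1 po2 ro p1 p2).

Definition gradVnav1 (po1 po2 ro pd1 pd2 rs rho p1 p2 : R) : R :=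
  p1 - pd1 + rho * Derive (phi rs) (d_o po1 po2 ro p1 p2)
                 * ((p1 - po1) / norm2 (p1 - po1) (p2 - po2)).
Definition gradVnav2 (po1 po2 ro pd1 pd2 rs rho p1 p2 : R) : R :=
  p2 - pd2 + rho * Derive (phi rs) (d_o po1 po2 ro p1 p2)
                 * ((p2 - po2) / norm2 (p1 - po1) (p2 - po2)).

(* T(p, theta) = p_o + R(theta)(p - p_o), R(theta) = [[cos,-sin],[sin,cos]] *)
Definition T1 (po1 po2 p1 p2 th : R) : R :=
  po1 + (cos th * (p1 - po1) - sin th * (p2 - po2)).
Definition T2 (po1 po2 p1 p2 th : R) : R :=
  po2 + (sin th * (p1 - po1) + cos th * (p2 - po2)).

Definition mVnav (po1 po2 ro pd1 pd2 rs rho gam p1 p2 th : R) : R :=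
  Vnav po1 po2 ro pd1 pd2 rs rho (T1 po1 po2 p1 p2 th) (T2 po1 po2 p1 p2 th)
  + gam / 2 * th ^ 2.

Definition dmV_p1 po1 po2 ro pd1 pd2 rs rho gam p1 p2 th : R :=
  Derive (fun x => mVnav po1 po2 ro pd1 pd2 rs rho gam x p2 th) p1.
Definition dmV_p2 po1 po2 ro pd1 pd2 rs rho gam p1 p2 th : R :=
  Derive (fun y => mVnav po1 po2 ro pd1 pd2 rs rho gam p1 y th) p2.
Definition dmV_th po1 po2 ro pd1 pd2 rs rho gam p1 p2 th : R :=
  Derive (fun t => mVnav po1 po2 ro pd1 pd2 rs rho gam p1 p2 t) th.

(* A rotation about the obstacle centre p_o does not change the distance
   d_o to the obstacle, so the barrier term ρ φ(d_o) of V_nav ∘ T does not depend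
   on θ and 𝒱 splits into a rotated attractive term, the barrier ρ φ(d_o(p)) and
   γθ²/2.  Differentiating each piece (using R(θ)^T R(θ) = I) gives the paper's
   formulas for ∇_p 𝒱 and ∇_θ 𝒱.  Writing q = p - p_o, a = p_d - p_o and
   k = ρ φ'(d_o(p)) / ||q||, one has ∇V_nav(p) = (1 + k) q - a and
   ∇_p 𝒱 = (1 + k) q - R(θ)^T a; when the latter vanishes, q is parallel to
   R(θ)^T a, so the cross term in ∇_θ 𝒱 vanishes and γθ = 0.  Hence the critical
   set of 𝒱 is C_{V_nav} × {0}. *)

From Stdlib Require Import Reals Lra Psatz.
From Coquelicot Require Import Coquelicot.
Open Scope R_scope.
Lemma ln_le_sub1 (x : R) : 0 < x -> ln x <= x - 1.
Proof.
  intros Hx. pose proof (exp_ineq1_le (ln x)) as Hexp.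
  rewrite exp_ln in Hexp by exact Hx. lra.
Qed.

Lemma is_derive_0_of_quadratic_bound (f : R -> R) (x C delta : R) :
  0 <= C -> 0 < delta ->
  (forall h, Rabs h < delta -> Rabs (f (x + h) - f x) <= C * h ^ 2) ->
  is_derive f x 0.
Proof.
  intros HC Hdelta Hbound. apply is_derive_Reals. intros e He.
  assert (Hpos : 0 < Rmin delta (e / (C + 1))).
  { apply Rmin_pos; [lra | apply Rdiv_lt_0_compat; lra]. }
  exists (mkposreal _ Hpos). intros h Hh0 Hh; simpl in Hh.
  pose proof (Rmin_l delta (e / (C + 1))) as Hmin_l.
  pose proof (Rmin_r delta (e / (C + 1))) as Hmin_r.
  assert (Ha : 0 < Rabs h) by (apply Rabs_pos_lt; exact Hh0).
  assert (Hsmall : Rabs h * (C + 1) < e).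
  { apply (Rmult_lt_reg_r (/ (C + 1))); [apply Rinv_0_lt_compat; lra|].
    rewrite Rmult_assoc, Rinv_r, Rmult_1_r by lra. unfold Rdiv in Hmin_r. lra. }
  assert (Hsq : h ^ 2 = Rabs h * Rabs h) by (rewrite <- pow2_abs; ring).
  pose proof (Hbound h ltac:(lra)) as Hf.
  rewrite Rminus_0_r, Rabs_div by exact Hh0.
  apply (Rmult_lt_reg_r (Rabs h)); [exact Ha|].
  unfold Rdiv; rewrite Rmult_assoc, Rinv_l, Rmult_1_r by lra.
  (* |f(x+h) - f(x)| <= C |h|^2 <= (C + 1) |h| |h| < e |h| *)
  nra.
Qed.

Lemma phi_at_threshold (rs : R) : phi rs rs = 0.
Proof. unfold phi. destruct (Rle_dec rs rs); [|lra]. rewrite Rminus_diag. ring. Qed.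

(* Near the threshold [rs] the barrier is bounded by [h^2]: for [rs/2 <= z <= rs]
   one has [0 <= ln (rs / z) <= rs / z - 1 <= 1]. *)
Lemma phi_quadratic_bound (rs h : R) : 0 < rs -> Rabs h < rs / 2 ->
  Rabs (phi rs (rs + h) - phi rs rs) <= 1 * h ^ 2.
Proof.
  intros Hrs Hh. apply Rabs_lt_between in Hh.
  rewrite phi_at_threshold, Rminus_0_r. unfold phi.
  destruct (Rle_dec (rs + h) rs) as [Hle|Hgt].
  - assert (Hratio : 1 <= rs / (rs + h) <= 2).
    { split; apply (Rmult_le_reg_r (rs + h)); try lra; field_simplify; lra. }
    assert (Hln0 : 0 <= ln (rs / (rs + h))) by (rewrite <- ln_1; apply ln_le; lra).
    pose proof (ln_le_sub1 (rs / (rs + h)) ltac:(lra)) as Hln1.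
    replace (rs + h - rs) with h by ring.
    rewrite Rabs_right by nra. nra.
  - rewrite Rabs_R0. nra.
Qed.

(* The barrier is differentiable on the whole half-line [z > 0]:
   it is smooth away from [rs] and flat to second order at [rs]. *)
Lemma phi_derivable (rs z : R) : 0 < rs -> 0 < z -> ex_derive (phi rs) z.
Proof.
  intros Hrs Hz.
  destruct (Rtotal_order z rs) as [Hlt | [-> | Hgt]].
  - apply ex_derive_ext_loc with (f := fun t => (t - rs) ^ 2 * ln (rs / t)).
    + apply (locally_interval _ z 0 rs); try (simpl; lra).
      intros t Ht0 Hts; simpl in Ht0, Hts. unfold phi.
      destruct (Rle_dec t rs); [reflexivity | lra].
    + auto_derive. repeat split; [lra | apply Rdiv_lt_0_compat; lra].
  - exists 0. apply (is_derive_0_of_quadratic_bound _ rs 1 (rs / 2)); try lra.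
    intros h Hh. apply phi_quadratic_bound; assumption.
  - apply ex_derive_ext_loc with (f := fun _ => 0).
    + apply (locally_interval _ z rs p_infty); try (simpl; lra).
      intros t Hts _; simpl in Hts. unfold phi.
      destruct (Rle_dec t rs); [lra | reflexivity].
    + auto_derive. exact I.
Qed.

Lemma is_derive_Rplus (f g : R -> R) (x a b : R) :
  is_derive f x a -> is_derive g x b -> is_derive (fun t => f t + g t) x (a + b).
Proof. exact (is_derive_plus f g x a b). Qed.

(* [R(θ)^T R(θ) = I], written componentwise. *)
Lemma rotation_orthogonal (th u v : R) :
  cos th * (cos th * u - sin th * v) + sin th * (sin th * u + cos th * v) = u /\
  - sin th * (cos th * u - sin th * v) + cos th * (sin th * u + cos th * v) = v.
Proof.
  pose proof (sin2_cos2 th) as Hpyth; unfold Rsqr in Hpyth.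
  split.
  - transitivity (u * (sin th * sin th + cos th * cos th)); [ring | rewrite Hpyth; ring].
  - transitivity (v * (sin th * sin th + cos th * cos th)); [ring | rewrite Hpyth; ring].
Qed.

Lemma d_o_rotation_invariant (po1 po2 ro p1 p2 th : R) :
  d_o po1 po2 ro (T1 po1 po2 p1 p2 th) (T2 po1 po2 p1 p2 th) = d_o po1 po2 ro p1 p2.
Proof.
  pose proof (sin2_cos2 th) as Hpyth; unfold Rsqr in Hpyth.
  unfold d_o, norm2, T1, T2. do 2 f_equal.
  transitivity (((p1 - po1) * (p1 - po1) + (p2 - po2) * (p2 - po2))
                * (sin th * sin th + cos th * cos th)); [ring | rewrite Hpyth; ring].
Qed.

Lemma mVnav_split (po1 po2 ro pd1 pd2 rs rho gam p1 p2 th : R) :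
  mVnav po1 po2 ro pd1 pd2 rs rho gam p1 p2 th =
  / 2 * ((T1 po1 po2 p1 p2 th - pd1) ^ 2 + (T2 po1 po2 p1 p2 th - pd2) ^ 2)
  + rho * phi rs (d_o po1 po2 ro p1 p2) + gam / 2 * th ^ 2.
Proof. unfold mVnav, Vnav. rewrite d_o_rotation_invariant. reflexivity. Qed.

Lemma dist_sq_pos_of_outside (po1 po2 ro p1 p2 : R) :
  0 < ro -> 0 < d_o po1 po2 ro p1 p2 ->
  0 < (p1 - po1) * (p1 - po1) + (p2 - po2) * (p2 - po2).
Proof.
  intros Hro Hd. destruct (Rle_lt_dec ((p1 - po1) * (p1 - po1) + (p2 - po2) * (p2 - po2)) 0)
    as [Hle | Hlt]; [exfalso | exact Hlt].
  assert (Hzero : (p1 - po1) * (p1 - po1) + (p2 - po2) * (p2 - po2) = 0).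
  { apply Rle_antisym; [exact Hle|].
    apply Rplus_le_le_0_compat; apply Rle_0_sqr. }
  unfold d_o, norm2 in Hd. rewrite Hzero, sqrt_0 in Hd. lra.
Qed.

Lemma d_o_partial_p1 (po1 po2 ro p1 p2 : R) :
  0 < (p1 - po1) * (p1 - po1) + (p2 - po2) * (p2 - po2) ->
  is_derive (fun x => d_o po1 po2 ro x p2) p1 ((p1 - po1) / norm2 (p1 - po1) (p2 - po2)).
Proof.
  intros Hpos. pose proof (sqrt_lt_R0 _ Hpos) as Hsqrt.
  unfold d_o, norm2. auto_derive; [lra|].
  replace (p1 + - po1) with (p1 - po1) by ring. field; lra.
Qed.

Lemma d_o_partial_p2 (po1 po2 ro p1 p2 : R) :
  0 < (p1 - po1) * (p1 - po1) + (p2 - po2) * (p2 - po2) ->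
  is_derive (fun y => d_o po1 po2 ro p1 y) p2 ((p2 - po2) / norm2 (p1 - po1) (p2 - po2)).
Proof.
  intros Hpos. pose proof (sqrt_lt_R0 _ Hpos) as Hsqrt.
  unfold d_o, norm2. auto_derive; [lra|].
  replace (p2 + - po2) with (p2 - po2) by ring. field; lra.
Qed.

Lemma barrier_partial_p1 (po1 po2 ro rs rho p1 p2 : R) :
  0 < rs -> 0 < ro -> 0 < d_o po1 po2 ro p1 p2 ->
  is_derive (fun x => rho * phi rs (d_o po1 po2 ro x p2)) p1
    (rho * ((p1 - po1) / norm2 (p1 - po1) (p2 - po2) * Derive (phi rs) (d_o po1 po2 ro p1 p2))).
Proof.
  intros Hrs Hro Hd.
  pose proof (Derive_correct _ _ (phi_derivable rs _ Hrs Hd)) as Dphi.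
  pose proof (d_o_partial_p1 po1 po2 ro p1 p2 (dist_sq_pos_of_outside _ _ _ _ _ Hro Hd)) as Dd.
  exact (is_derive_scal _ p1 rho _ (is_derive_comp _ _ p1 _ _ Dphi Dd)).
Qed.

Lemma barrier_partial_p2 (po1 po2 ro rs rho p1 p2 : R) :
  0 < rs -> 0 < ro -> 0 < d_o po1 po2 ro p1 p2 ->
  is_derive (fun y => rho * phi rs (d_o po1 po2 ro p1 y)) p2
    (rho * ((p2 - po2) / norm2 (p1 - po1) (p2 - po2) * Derive (phi rs) (d_o po1 po2 ro p1 p2))).
Proof.
  intros Hrs Hro Hd.
  pose proof (Derive_correct _ _ (phi_derivable rs _ Hrs Hd)) as Dphi.
  pose proof (d_o_partial_p2 po1 po2 ro p1 p2 (dist_sq_pos_of_outside _ _ _ _ _ Hro Hd)) as Dd.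
  exact (is_derive_scal _ p2 rho _ (is_derive_comp _ _ p2 _ _ Dphi Dd)).
Qed.

(* The gradient formulas of the paper: [∇_p 𝒱 = ∇V_nav(p) + (I - R(θ))^T (p_d - p_o)]
   (using [R(θ)^T R(θ) = I]) and [∇_θ 𝒱 = γθ - (p - p_o)^T Δ R(θ)^T (p_o - p_d)]. *)
Lemma mVnav_gradient (po1 po2 ro pd1 pd2 rs rho gam p1 p2 th : R) :
  0 < rs -> 0 < ro -> 0 < d_o po1 po2 ro p1 p2 ->
  is_derive (fun x => mVnav po1 po2 ro pd1 pd2 rs rho gam x p2 th) p1
    (gradVnav1 po1 po2 ro pd1 pd2 rs rho p1 p2
     + ((pd1 - po1) - (cos th * (pd1 - po1) + sin th * (pd2 - po2)))) /\
  is_derive (fun y => mVnav po1 po2 ro pd1 pd2 rs rho gam p1 y th) p2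
    (gradVnav2 po1 po2 ro pd1 pd2 rs rho p1 p2
     + ((pd2 - po2) - (- sin th * (pd1 - po1) + cos th * (pd2 - po2)))) /\
  is_derive (fun t => mVnav po1 po2 ro pd1 pd2 rs rho gam p1 p2 t) th
    (gam * th
     - ((p1 - po1) * (- (- sin th * (po1 - pd1) + cos th * (po2 - pd2)))
        + (p2 - po2) * (cos th * (po1 - pd1) + sin th * (po2 - pd2)))).
Proof.
  intros Hrs Hro Hd.
  destruct (rotation_orthogonal th (p1 - po1) (p2 - po2)) as [Horth1 Horth2].
  split; [|split]; (eapply is_derive_ext; [intro t; symmetry; apply mVnav_split|]).
  - replace (gradVnav1 _ _ _ _ _ _ _ _ _ + _) with
      (cos th * (T1 po1 po2 p1 p2 th - pd1) + sin th * (T2 po1 po2 p1 p2 th - pd2)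
       + rho * ((p1 - po1) / norm2 (p1 - po1) (p2 - po2)
                * Derive (phi rs) (d_o po1 po2 ro p1 p2)) + 0)
      by (unfold gradVnav1, T1, T2, Rdiv; lra).
    apply is_derive_Rplus; [apply is_derive_Rplus|].
    + unfold T1, T2. auto_derive; [exact I | field].
    + exact (barrier_partial_p1 _ _ _ _ _ _ _ Hrs Hro Hd).
    + auto_derive; [exact I | ring].
  - replace (gradVnav2 _ _ _ _ _ _ _ _ _ + _) with
      (- sin th * (T1 po1 po2 p1 p2 th - pd1) + cos th * (T2 po1 po2 p1 p2 th - pd2)
       + rho * ((p2 - po2) / norm2 (p1 - po1) (p2 - po2)
                * Derive (phi rs) (d_o po1 po2 ro p1 p2)) + 0)
      by (unfold gradVnav2, T1, T2, Rdiv; lra).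
    apply is_derive_Rplus; [apply is_derive_Rplus|].
    + unfold T1, T2. auto_derive; [exact I | field].
    + exact (barrier_partial_p2 _ _ _ _ _ _ _ Hrs Hro Hd).
    + auto_derive; [exact I | ring].
  - unfold T1, T2. auto_derive; [exact I | field].
Qed.

(* The radial gain [k(p) = ρ φ'(d_o(p)) / ||p - p_o||] of the barrier, so that
   [∇V_nav(p) = (1 + k(p)) (p - p_o) - (p_d - p_o)]. *)
Definition barrier_gain (po1 po2 ro rs rho p1 p2 : R) : R :=
  rho * Derive (phi rs) (d_o po1 po2 ro p1 p2) / norm2 (p1 - po1) (p2 - po2).

Lemma gradVnav1_factor (po1 po2 ro pd1 pd2 rs rho p1 p2 : R) :
  gradVnav1 po1 po2 ro pd1 pd2 rs rho p1 p2 =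
  (1 + barrier_gain po1 po2 ro rs rho p1 p2) * (p1 - po1) - (pd1 - po1).
Proof. unfold gradVnav1, barrier_gain, Rdiv. ring. Qed.

Lemma gradVnav2_factor (po1 po2 ro pd1 pd2 rs rho p1 p2 : R) :
  gradVnav2 po1 po2 ro pd1 pd2 rs rho p1 p2 =
  (1 + barrier_gain po1 po2 ro rs rho p1 p2) * (p2 - po2) - (pd2 - po2).
Proof. unfold gradVnav2, barrier_gain, Rdiv. ring. Qed.

(* The core algebra of the critical-point characterisation, with [q = p - p_o],
   [a = p_d - p_o], [w = R(θ)^T a]: if [(1 + k) q = w] then [q] is parallel to [w],
   so the cross term [q ∧ w] vanishes and the angular condition forces [γθ = 0]. *)
Lemma rotated_critical_conditions (k q1 q2 a1 a2 gam th : R) : gam <> 0 ->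
  ((1 + k) * q1 - (cos th * a1 + sin th * a2) = 0 /\
   (1 + k) * q2 - (- sin th * a1 + cos th * a2) = 0 /\
   gam * th - (q1 * (- sin th * a1 + cos th * a2) - q2 * (cos th * a1 + sin th * a2)) = 0)
  <-> (((1 + k) * q1 - a1 = 0 /\ (1 + k) * q2 - a2 = 0) /\ th = 0).
Proof.
  intros Hgam. split.
  - intros [E1 [E2 E3]].
    assert (Hth : th = 0).
    { apply (Rmult_eq_reg_l gam); [|exact Hgam]. rewrite Rmult_0_r.
      replace (cos th * a1 + sin th * a2) with ((1 + k) * q1) in E3 by lra.
      replace (- sin th * a1 + cos th * a2) with ((1 + k) * q2) in E3 by lra.
      rewrite <- E3. ring. }
    subst th. rewrite cos_0, sin_0 in E1, E2. split; [split | reflexivity]; lra.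
  - intros [[E1 E2] ->]. rewrite cos_0, sin_0.
    split; [lra | split; [lra |]].
    replace a1 with ((1 + k) * q1) by lra. replace a2 with ((1 + k) * q2) by lra. ring.
Qed.

Lemma mVnav_partials_normal_form (po1 po2 ro pd1 pd2 rs rho gam p1 p2 th : R) :
  0 < rs -> 0 < ro -> 0 < d_o po1 po2 ro p1 p2 ->
  dmV_p1 po1 po2 ro pd1 pd2 rs rho gam p1 p2 th =
    (1 + barrier_gain po1 po2 ro rs rho p1 p2) * (p1 - po1)
    - (cos th * (pd1 - po1) + sin th * (pd2 - po2)) /\
  dmV_p2 po1 po2 ro pd1 pd2 rs rho gam p1 p2 th =
    (1 + barrier_gain po1 po2 ro rs rho p1 p2) * (p2 - po2)
    - (- sin th * (pd1 - po1) + cos th * (pd2 - po2)) /\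
  dmV_th po1 po2 ro pd1 pd2 rs rho gam p1 p2 th =
    gam * th - ((p1 - po1) * (- sin th * (pd1 - po1) + cos th * (pd2 - po2))
                - (p2 - po2) * (cos th * (pd1 - po1) + sin th * (pd2 - po2))).
Proof.
  intros Hrs Hro Hd.
  destruct (mVnav_gradient po1 po2 ro pd1 pd2 rs rho gam p1 p2 th Hrs Hro Hd)
    as [D1 [D2 D3]].
  apply is_derive_unique in D1, D2, D3. simpl in D1, D2, D3.
  unfold dmV_p1, dmV_p2, dmV_th. rewrite D1, D2, D3.
  rewrite gradVnav1_factor, gradVnav2_factor.
  repeat split; ring.
Qed.

Lemma mVnav_critical_iff (po1 po2 ro pd1 pd2 rs rho gam p1 p2 th : R) :
  gam <> 0 -> 0 < rs -> 0 < ro -> 0 < d_o po1 po2 ro p1 p2 ->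
  (dmV_p1 po1 po2 ro pd1 pd2 rs rho gam p1 p2 th = 0 /\
   dmV_p2 po1 po2 ro pd1 pd2 rs rho gam p1 p2 th = 0 /\
   dmV_th po1 po2 ro pd1 pd2 rs rho gam p1 p2 th = 0)
  <-> ((gradVnav1 po1 po2 ro pd1 pd2 rs rho p1 p2 = 0 /\
        gradVnav2 po1 po2 ro pd1 pd2 rs rho p1 p2 = 0) /\ th = 0).
Proof.
  intros Hgam Hrs Hro Hd.
  destruct (mVnav_partials_normal_form po1 po2 ro pd1 pd2 rs rho gam p1 p2 th Hrs Hro Hd)
    as [-> [-> ->]].
  rewrite gradVnav1_factor, gradVnav2_factor.
  apply rotated_critical_conditions; exact Hgam.
Qed.

Lemma in_Xp_outside (po1 po2 ro eps p1 p2 : R) :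
  0 < eps -> in_Xp po1 po2 ro eps p1 p2 -> 0 < d_o po1 po2 ro p1 p2.
Proof. unfold in_Xp, d_o. lra. Qed.

Theorem lemma2 (po1 po2 ro eps pd1 pd2 rs rho gam : R)
  (Hro : 0 < ro) (Heps : 0 < eps)
  (Hpd : in_Xp po1 po2 ro eps pd1 pd2)
  (Hrs1 : eps < rs) (Hrs2 : rs < d_o po1 po2 ro pd1 pd2)
  (Hrho : 0 < rho) (Hgam : 0 < gam) :
  (forall p1 p2 th : R, in_Xp po1 po2 ro eps p1 p2 ->
     (* nabla_p = nabla_p V_nav(p) + (I - R(theta))^T (p_d - p_o) *)
     is_derive (fun x => mVnav po1 po2 ro pd1 pd2 rs rho gam x p2 th) p1
       (gradVnav1 po1 po2 ro pd1 pd2 rs rho p1 p2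
        + ((pd1 - po1) - (cos th * (pd1 - po1) + sin th * (pd2 - po2)))) /\
     is_derive (fun y => mVnav po1 po2 ro pd1 pd2 rs rho gam p1 y th) p2
       (gradVnav2 po1 po2 ro pd1 pd2 rs rho p1 p2
        + ((pd2 - po2) - (- sin th * (pd1 - po1) + cos th * (pd2 - po2)))) /\
     (* nabla_theta = gam theta - (p - p_o)^T Delta R(theta)^T (p_o - p_d) *)
     is_derive (fun t => mVnav po1 po2 ro pd1 pd2 rs rho gam p1 p2 t) th
       (gam * th
        - ((p1 - po1) * (- (- sin th * (po1 - pd1) + cos th * (po2 - pd2)))
           + (p2 - po2) * (cos th * (po1 - pd1) + sin th * (po2 - pd2))))) /\
  (* critical set of the modified function equals C_{V_nav} x {0} *)
  (forall p1 p2 th : R,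
     (in_Xp po1 po2 ro eps p1 p2 /\
      dmV_p1 po1 po2 ro pd1 pd2 rs rho gam p1 p2 th = 0 /\
      dmV_p2 po1 po2 ro pd1 pd2 rs rho gam p1 p2 th = 0 /\
      dmV_th po1 po2 ro pd1 pd2 rs rho gam p1 p2 th = 0)
     <->
     ((in_Xp po1 po2 ro eps p1 p2 /\
       gradVnav1 po1 po2 ro pd1 pd2 rs rho p1 p2 = 0 /\
       gradVnav2 po1 po2 ro pd1 pd2 rs rho p1 p2 = 0) /\ th = 0)).
Proof.
  assert (Hrs : 0 < rs) by lra.
  assert (Hgam0 : gam <> 0) by lra.
  split.
  - intros p1 p2 th HX.
    exact (mVnav_gradient po1 po2 ro pd1 pd2 rs rho gam p1 p2 th Hrs Hro
             (in_Xp_outside _ _ _ _ _ _ Heps HX)).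
  - intros p1 p2 th. split.
    + intros [HX Hcrit].
      apply (mVnav_critical_iff _ _ _ _ _ _ _ _ _ _ _ Hgam0 Hrs Hro
               (in_Xp_outside _ _ _ _ _ _ Heps HX)) in Hcrit.
      tauto.
    + intros [[HX Hgrad] Hth]. split; [exact HX |].
      apply (mVnav_critical_iff _ _ _ _ _ _ _ _ _ _ _ Hgam0 Hrs Hro
               (in_Xp_outside _ _ _ _ _ _ Heps HX)).
      tauto.
Qed.
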